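(* There exists a constant $C$ such that for all $x,y\in[0,1]$, $\zeta(xy)\leq C\,\zeta(x)\,\zeta(y)$.
   Context: $\zeta(x)=\frac{1}{2\sqrt2}\int_0^x\sqrt{\frac{\log(1+u^{-2})}{u}}\,du$ for $x\geq0$. *)

From mathcomp Require Import all_boot all_order all_algebra.
From mathcomp Require Import all_classical all_reals all_analysis.
Set Implicit Arguments. Unset Strict Implicit. Unset Printing Implicit Defensive.
Import Order.TTheory GRing.Theory Num.Theory.
Local Open Scope classical_set_scope.
Local Open Scope ring_scope.

Definition zeta_integrand {R : realType} (u : R) : R :=
  Num.sqrt (ln (1 + u ^- 2) / u).

(* zeta(x) = 1/(2 sqrt 2) * \int_0^x sqrt(log(1+u^{-2})/u) du  (Lebesgue integral;
   the integrand is nonnegative and integrable near 0, so the integral is finite) *)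
Definition zeta {R : realType} (x : R) : R :=
  (2 * Num.sqrt 2)^-1 *
    fine (\int[@lebesgue_measure R]_(u in `[0%R, x]%classic) (zeta_integrand u)%:E)%E.

(* Write [f] for the integrand and [Z a] for its integral over [[0, a]], so that
   [zeta = Z / (2 sqrt 2)].  On (0, 1] we have [ln (1 + u^-2) >= ln 2], and
   [ln (1 + (xy)^-2) <= ln (1 + x^-2) + ln (1 + y^-2)]; together they make [f]
   submultiplicative up to the constant [c = sqrt (2 / ln 2)]:
   [f (xy) <= c f(x) f(y)].  The substitution [u = a t] gives
   [Z a = a \int_0^1 f (a t) dt <= c a f(a) Z 1], and since [f] is nonincreasing,
   [a f(a) <= Z a].  Hence
   [Z (xy) <= c xy f(xy) Z 1 <= c^2 Z 1 (x f(x)) (y f(y)) <= c^2 Z 1 Z x Z y].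
   If [Z 1 = +oo], then [Z (xy) = +oo] as well and [zeta (xy) = 0]. *)

From mathcomp Require Import all_boot all_order all_algebra.
From mathcomp Require Import all_classical all_reals all_analysis.
From mathcomp Require Import measurable_realfun ring.
Import Order.TTheory GRing.Theory Num.Theory.
Import numFieldNormedType.Exports.
Local Open Scope classical_set_scope.
Local Open Scope ring_scope.

Section zeta_log.
Context {R : realType}.

Definition zeta_log (u : R) : R := ln (1 + u ^- 2).

Let add1Vsqr_gt0 (u : R) : 0 < 1 + u ^- 2.
Proof. by rewrite ltr_pwDl // invr_ge0 exprn_even_ge0. Qed.

Lemma zeta_log_ge0 (u : R) : 0 <= zeta_log u.
Proof. by apply: ln_ge0; rewrite lerDl invr_ge0 exprn_even_ge0. Qed.

Lemma ln2_le_zeta_log (u : R) : 0 < u <= 1 -> ln 2 <= zeta_log u.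
Proof.
move=> /andP[u0 u1]; rewrite /zeta_log ler_ln ?posrE ?ltr0n //.
by rewrite [2%R]/(1 + 1) lerD2l invf_ge1 ?exprn_gt0 // expr_le1 // ltW.
Qed.

Lemma zeta_log_nonincreasing (u v : R) : 0 < u -> u <= v -> zeta_log v <= zeta_log u.
Proof.
move=> u0 uv; rewrite /zeta_log ler_ln ?posrE // lerD2l.
have v0 := lt_le_trans u0 uv.
by rewrite lef_pV2 ?posrE ?exprn_gt0 // lerXn2r // nnegrE ltW.
Qed.

Lemma zeta_logM_le_add (x y : R) : 0 < x -> 0 < y ->
  zeta_log (x * y) <= zeta_log x + zeta_log y.
Proof.
move=> x0 y0; rewrite /zeta_log -lnM ?posrE // ler_ln ?posrE ?mulr_gt0 //.
rewrite exprMn invfM mulrDl mul1r mulrDr mulr1 addrA lerD2r.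
by rewrite -addrA lerDl addr_ge0 // invr_ge0 exprn_even_ge0.
Qed.

(* Subadditivity, and [a + b <= 2 a b / ln 2] whenever [a, b >= ln 2]. *)
Lemma zeta_logM_le (x y : R) : 0 < x <= 1 -> 0 < y <= 1 ->
  zeta_log (x * y) <= 2 / ln 2 * zeta_log x * zeta_log y.
Proof.
move=> x01 y01; have ln2_gt0 : 0 < ln (2 : R) by rewrite ln_gt0 ?ltr1n.
have lx := ln2_le_zeta_log _ x01; have ly := ln2_le_zeta_log _ y01.
case/andP: x01 => x0 _; case/andP: y01 => y0 _.
apply: (le_trans (zeta_logM_le_add _ _ x0 y0)).
have -> : 2 / ln 2 * zeta_log x * zeta_log y =
    zeta_log x * (zeta_log y / ln 2) + zeta_log y * (zeta_log x / ln 2).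
  by field; rewrite gt_eqF.
by apply: lerD; rewrite ler_peMr ?zeta_log_ge0 // ler_pdivlMr // mul1r.
Qed.

End zeta_log.

Section zeta_integrand.
Context {R : realType}.
Local Notation f := (@zeta_integrand R).

Definition zeta_integrand_const : R := Num.sqrt (2 / ln 2).

Lemma zeta_integrand_ge0 (u : R) : 0 <= f u.
Proof. exact: sqrtr_ge0. Qed.

Lemma zeta_integrand_le0 (u : R) : u <= 0 -> f u = 0.
Proof.
by move=> u0; rewrite /zeta_integrand ler0_sqrtr // mulr_ge0_le0 ?invr_le0 ?zeta_log_ge0.
Qed.

Lemma zeta_integrand_nonincreasing (u v : R) : 0 < u -> u <= v -> f v <= f u.
Proof.
move=> u0 uv; have v0 := lt_le_trans u0 uv.
rewrite /zeta_integrand -!/(zeta_log _) ler_sqrt; last by rewrite divr_ge0 ?zeta_log_ge0 ?ltW.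
apply: (le_trans (ler_wpM2r _ (zeta_log_nonincreasing _ _ u0 uv))).
  by rewrite invr_ge0 ltW.
by rewrite ler_wpM2l ?zeta_log_ge0 // lef_pV2.
Qed.

Lemma zeta_integrandM_le (x y : R) : 0 <= x <= 1 -> 0 <= y <= 1 ->
  f (x * y) <= zeta_integrand_const * f x * f y.
Proof.
move=> /andP[x0 x1] /andP[y0 y1].
have [->|xn0] := eqVneq x 0; first by rewrite mul0r zeta_integrand_le0 // mulr0 mul0r.
have [->|yn0] := eqVneq y 0; first by rewrite mulr0 zeta_integrand_le0 // mulr0.
have xp : 0 < x by rewrite lt_neqAle eq_sym xn0.
have yp : 0 < y by rewrite lt_neqAle eq_sym yn0.
have K0 : 0 <= 2 / ln 2 :> R by rewrite divr_ge0 // ln_ge0 ?ler1n.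
rewrite /zeta_integrand_const /zeta_integrand -!/(zeta_log _).
have Lx0 : 0 <= zeta_log x / x by rewrite divr_ge0 ?zeta_log_ge0 ?ltW.
have Ly0 : 0 <= zeta_log y / y by rewrite divr_ge0 ?zeta_log_ge0 ?ltW.
rewrite -sqrtrM // -sqrtrM; last exact: mulr_ge0.
rewrite ler_sqrt; last first.
  exact: mulr_ge0 (mulr_ge0 K0 Lx0) Ly0.
have -> : 2 / ln 2 * (zeta_log x / x) * (zeta_log y / y) =
    2 / ln 2 * zeta_log x * zeta_log y / (x * y) by rewrite invfM; ring.
by rewrite ler_pM2r ?invr_gt0 ?mulr_gt0 // zeta_logM_le ?xp ?yp.
Qed.

Lemma zeta_integrand_continuous (x : R) : 0 < x -> {for x, continuous f}.
Proof.
move=> x0; apply: continuous_comp; last exact: sqrt_continuous.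
apply: cvgM; last by apply: inv_continuous; rewrite gt_eqF.
apply: continuous_comp; last by apply: continuous_ln; rewrite ltr_pwDl // invr_ge0 exprn_even_ge0.
apply: cvgD; first exact: cvg_cst.
apply: (@continuousV _ _ (fun u : R => u ^+ 2)); first by rewrite expf_neq0 // gt_eqF.
exact: exprn_continuous.
Qed.

Lemma measurable_zeta_integrand : measurable_fun setT f.
Proof.
rewrite -(setUCr `]-oo, 0%R]%classic) setCitvl.
apply/measurable_funU => //; split.
  apply: (eq_measurable_fun (cst (0 : R))); last exact: measurable_cst.
  by move=> u; rewrite inE /= in_itv /= => u0; rewrite zeta_integrand_le0.
apply: open_continuous_measurable_fun; first exact: interval_open.
by move=> u; rewrite inE /= in_itv /= andbT; exact: zeta_integrand_continuous.
Qed.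

End zeta_integrand.

Section lebesgue_dilation.
Context {R : realType}.
Local Notation mu := (@lebesgue_measure R).
Local Notation dilation a := (( *%R a) : measurableTypeR R -> measurableTypeR R).

Let measurable_dilation (a : R) : measurable_fun setT (dilation a).
Proof. exact: mulrl_measurable. Qed.

Lemma dilation_preimage_itvoc (a x1 x2 : R) : 0 < a ->
  ( *%R a) @^-1` `]x1, x2] = `]x1 / a, x2 / a]%classic.
Proof.
move=> a0; apply/seteqP; split => t;
  by rewrite /= !in_itv /= ltr_pdivrMr // ler_pdivlMr // ![t * a]mulrC.
Qed.

Lemma lebesgue_measure_dilation (a : R) (A : set R) : 0 < a -> measurable A ->
  mu A = (a%:E * pushforward mu (dilation a) A)%E.
Proof.
move=> a0; pose k : {nonneg R} := NngNum (ltW a0).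
apply: (@lebesgue_measure_unique R (mscale k (pushforward mu (dilation a)))).
move=> _ [[x1 x2] _ <-] /=; rewrite /mscale /= /pushforward dilation_preimage_itvoc //.
rewrite !lebesgue_measure_itv /= !lte_fin ltr_pM2r ?invr_gt0 //.
case: ifPn => _; last by rewrite mule0.
by rewrite -!EFinD -EFinM mulrBr !(mulrC a) !mulfVK ?gt_eqF.
Qed.

Lemma ge0_integral_dilation (a : R) (D : set R) (f : R -> \bar R) :
  0 < a -> measurable D -> measurable_fun D f -> (forall x, D x -> (0 <= f x)%E) ->
  (\int[mu]_(x in D) f x = a%:E * \int[mu]_(t in ( *%R a) @^-1` D) f (a * t)%R)%E.
Proof.
move=> a0 mD mf f0; pose k : {nonneg R} := NngNum (ltW a0).
pose nu := measure_function_pushforward__canonical__measure_function_Measure mu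
  (measurable_dilation a).
transitivity (\int[mscale k nu]_(x in D) f x)%E.
  by apply: eq_measure_integral => A mA _; rewrite /mscale /= (lebesgue_measure_dilation a).
rewrite ge0_integral_mscale // ge0_integral_pushforward //.
by move=> x /set_mem; exact: f0.
Qed.

End lebesgue_dilation.

Section zeta_primitive.
Context {R : realType}.
Local Notation f := (@zeta_integrand R).
Local Notation mu := (@lebesgue_measure R).
Local Notation c := (@zeta_integrand_const R).
Local Open Scope ereal_scope.

Definition zeta_primitive (a : R) : \bar R := \int[mu]_(u in `[0%R, a]) (f u)%:E.
Local Notation Z := zeta_primitive.

Lemma zetaE (a : R) : zeta a = ((2 * Num.sqrt 2)^-1 * fine (Z a))%R.
Proof. by []. Qed.

Let measurable_zeta_integrandE : measurable_fun setT (fun u => (f u)%:E).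
Proof. by apply/measurable_EFinP; exact: measurable_zeta_integrand. Qed.

Let zeta_integrandE_ge0 (D : set R) : forall u, D u -> 0 <= (f u)%:E.
Proof. by move=> u _; rewrite lee_fin zeta_integrand_ge0. Qed.

Lemma zeta_primitive_ge0 (a : R) : 0 <= Z a.
Proof. exact/integral_ge0/zeta_integrandE_ge0. Qed.

Lemma zeta_primitive0 : Z 0 = 0.
Proof. by rewrite /Z set_itv1 integral_set1. Qed.

Lemma le_zeta_primitive (a b : R) : (a <= b)%R -> Z a <= Z b.
Proof.
move=> ab; apply: ge0_subset_integral => //.
- exact: measurable_funTS.
- exact: zeta_integrandE_ge0.
- by apply: subset_itv; rewrite ?bnd_simp.
Qed.

Lemma zeta_primitive_ge (a : R) : (0 < a)%R -> (a * f a)%:E <= Z a.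
Proof.
move=> a0; apply: (@le_trans _ _ (\int[mu]_(u in `]0%R, a]) (f u)%:E)); last first.
  apply: ge0_subset_integral => //.
  - exact: measurable_funTS.
  - exact: zeta_integrandE_ge0.
  - by apply: subset_itv; rewrite ?bnd_simp.
have -> : (a * f a)%:E = \int[mu]_(u in `]0%R, a]) (cst (f a)%:E u).
  have := lebesgue_measure_itv `]0%R, a]; rewrite /= lte_fin a0 -EFinD subr0 => mu0a.
  by rewrite integral_cst //= mu0a -EFinM mulrC.
apply: ge0_le_integral => //.
- by move=> u _; rewrite lee_fin zeta_integrand_ge0.
- exact: measurable_funTS.
- move=> u; rewrite /= in_itv /= => /andP[u0 ua].
  by rewrite lee_fin zeta_integrand_nonincreasing.
Qed.

Lemma zeta_primitive_dilation (a : R) : (0 < a)%R ->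
  Z a = a%:E * \int[mu]_(t in `[0%R, 1%R]) (f (a * t))%:E.
Proof.
move=> a0; rewrite /Z (ge0_integral_dilation a) //; last first.
- exact: zeta_integrandE_ge0.
- exact: measurable_funTS.
congr (_ * integral _ _ _); apply/seteqP; split => t /=; rewrite !in_itv /=.
  by move=> /andP[t0 ta]; rewrite -(pmulr_rge0 _ a0) t0 -(ler_pM2l a0) mulr1.
by move=> /andP[t0 t1]; rewrite mulr_ge0 ?(ltW a0) //= ler_piMr // ltW.
Qed.

Let measurable_zeta_integrand_dilation (a : R) :
  measurable_fun setT (fun t => (f (a * t))%:E).
Proof.
apply/measurable_EFinP/measurableT_comp; first exact: measurable_zeta_integrand.
exact: mulrl_measurable.
Qed.

Lemma zeta_primitive_le (a : R) : (0 < a <= 1)%R -> Z a <= (c * a * f a)%:E * Z 1.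
Proof.
move=> /andP[a0 a1]; rewrite zeta_primitive_dilation //.
apply: (@le_trans _ _ (a%:E * \int[mu]_(t in `[0%R, 1%R]) ((c * f a)%:E * (f t)%:E))).
  apply: lee_wpmul2l; first by rewrite lee_fin ltW.
  apply: ge0_le_integral => //.
  - by move=> t _; rewrite lee_fin zeta_integrand_ge0.
  - exact: measurable_funTS (measurable_zeta_integrand_dilation a).
  - exact/measurable_funeM/measurable_funTS.
  move=> t; rewrite /= in_itv /= => /andP[t0 t1].
  by rewrite -EFinM lee_fin zeta_integrandM_le ?a1 ?t0 ?t1 ?ltW.
rewrite ge0_integralZl //.
- by rewrite muleA -EFinM mulrA (mulrC a c).
- exact: measurable_funTS.
- exact: zeta_integrandE_ge0.
- by rewrite lee_fin mulr_ge0 ?zeta_integrand_ge0 ?sqrtr_ge0.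
Qed.

Lemma zeta_primitive_ge_dilation (a : R) : (0 < a <= 1)%R -> a%:E * Z 1 <= Z a.
Proof.
move=> /andP[a0 a1]; rewrite [leRHS]zeta_primitive_dilation //.
apply: lee_wpmul2l; first by rewrite lee_fin ltW.
apply: ge0_le_integral => //.
- exact: zeta_integrandE_ge0.
- exact: measurable_funTS.
- exact: measurable_funTS (measurable_zeta_integrand_dilation a).
move=> t; rewrite /= in_itv /= => /andP[t0 t1]; rewrite lee_fin.
have [->|tn0] := eqVneq t 0%R; first by rewrite mulr0 zeta_integrand_le0.
apply: zeta_integrand_nonincreasing; first by rewrite mulr_gt0 // lt_neqAle eq_sym tn0.
by rewrite ler_piMl // ltW.
Qed.

Lemma zeta_primitive_pinfty (a : R) : (0 < a <= 1)%R -> Z 1 = +oo -> Z a = +oo.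
Proof.
move=> a01 Z1; have := zeta_primitive_ge_dilation _ a01.
case/andP: a01 => a0 _.
by rewrite Z1 gt0_muley ?lte_fin // leye_eq => /eqP.
Qed.

Lemma zeta_primitiveM_le (x y : R) : (0 <= x <= 1)%R -> (0 <= y <= 1)%R ->
  (fine (Z (x * y)) <= c ^+ 2 * fine (Z 1) * fine (Z x) * fine (Z y))%R.
Proof.
move=> /andP[x0 x1] /andP[y0 y1].
have [->|xn0] := eqVneq x 0%R; first by rewrite mul0r zeta_primitive0 /= mulr0 mul0r.
have [->|yn0] := eqVneq y 0%R; first by rewrite mulr0 zeta_primitive0 /= mulr0.
have xp : (0 < x)%R by rewrite lt_neqAle eq_sym xn0.
have yp : (0 < y)%R by rewrite lt_neqAle eq_sym yn0.
have xy1 : (x * y <= 1)%R by rewrite mulr_ile1.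
have xyp : (0 < x * y)%R by rewrite mulr_gt0.
have xy01 : (0 < x * y <= 1)%R by rewrite xyp xy1.
have [Z1fin|] := ltP (Z 1) +oo; last first.
  (* [Z (x * y) = +oo] too, and [fine] maps it to [0]. *)
  rewrite leye_eq => /eqP Z1.
  by rewrite (zeta_primitive_pinfty _ xy01 Z1) Z1 /= mulr0 !mul0r.
have ZE a : (a <= 1)%R -> Z a = (fine (Z a))%:E.
  move=> a1; rewrite fineK // ge0_fin_numE ?zeta_primitive_ge0 //.
  exact: le_lt_trans (le_zeta_primitive _ _ a1) Z1fin.
have Zxy := zeta_primitive_le _ xy01.
rewrite (ZE _ xy1) (ZE _ (lexx 1)) -EFinM lee_fin in Zxy.
have Zx := zeta_primitive_ge _ xp; rewrite (ZE _ x1) lee_fin in Zx.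
have Zy := zeta_primitive_ge _ yp; rewrite (ZE _ y1) lee_fin in Zy.
have c0 : (0 <= c)%R by exact: sqrtr_ge0.
apply: (le_trans Zxy).
apply: (@le_trans _ _ (c ^+ 2 * fine (Z 1) * (x * f x * (y * f y)))%R).
  have -> : (c ^+ 2 * fine (Z 1) * (x * f x * (y * f y)) =
      c * (x * y) * (c * f x * f y) * fine (Z 1))%R by ring.
  rewrite ler_wpM2r ?fine_ge0 ?zeta_primitive_ge0 // ler_wpM2l ?(mulr_ge0 c0 (ltW xyp)) //.
  by apply: zeta_integrandM_le; apply/andP.
rewrite -[leRHS]mulrA ler_wpM2l ?mulr_ge0 ?fine_ge0 ?zeta_primitive_ge0 //.
by rewrite ler_pM // mulr_ge0 ?zeta_integrand_ge0 // ltW.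
Qed.

End zeta_primitive.

Theorem mainTheorem4 (R : realType) :
  exists C : R, forall x y : R, 0 <= x <= 1 -> 0 <= y <= 1 ->
    zeta (x * y) <= C * zeta x * zeta y.
Proof.
set k : R := (2 * Num.sqrt 2)^-1.
have k0 : 0 < k by rewrite invr_gt0 mulr_gt0 ?sqrtr_gt0.
set Z := fun a : R => fine (zeta_primitive a).
set C0 := zeta_integrand_const ^+ 2 * Z 1.
exists (C0 / k) => x y x01 y01; rewrite !zetaE -/k -!/(Z _).
rewrite [leRHS](_ : _ = k * (C0 * Z x * Z y)); last by field; rewrite gt_eqF.
by rewrite ler_wpM2l ?(ltW k0) // zeta_primitiveM_le.
Qed.
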